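(* Let $(\mathcal M,\delta)$ be a metric space and let $d$ be a metric on $\mathcal M\times\mathcal M$ satisfying, for all $x,y,u,v\in\mathcal M$, \[ d\big[(x,u),(x,v)\big]=\delta(u,v),\qquad d\big[(x,u),(y,u)\big]=\delta(x,y),\qquad d\big[(x,x),(u,v)\big]\ge\delta(u,v). \] Let $X,Y$ be $\mathcal M$-valued random variables with finite first moments. Let $X'$ be distributed as $X$ and $Y'$ distributed as $Y$, with $X'$ and $Y'$ independent. Then \[ e\big[(X,Y),(X',Y')\big]\le \min\Big\{e\big[(X,X),(X,X')\big],\ e\big[(Y,Y),(Y,Y')\big]\Big\}, \] where in $e[(X,X),(X,X')]$ the variable $X'$ is an independent copy of $X$ (and similarly for $Y$). In the notation of the context: $\mathrm{eCov}(X,Y)\le\min\{\mathrm{eVar}(X),\mathrm{eVar}(Y)\}$.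
   Context: For probability measures $\mu,\nu$ on a metric space $(S,\rho)$ with finite first moments (i.e. $\int\rho(s,s_0)\,d\mu(s)<\infty$ for some $s_0$, and likewise for $\nu$), the earth mover's (Wasserstein-1) distance is $e(\mu,\nu)=\inf_{\gamma}\int\rho(s,t)\,d\gamma(s,t)$, the infimum over all couplings $\gamma$ of $\mu$ and $\nu$. For random elements $U,V$ we write $e(U,V)$ for the distance between their laws. A random variable $X$ in $(\mathcal M,\delta)$ has finite first moment if $\mathbb E\,\delta(X,x_0)<\infty$ for some $x_0\in\mathcal M$. The earth mover's covariance of $\mathcal M$-valued random variables $X,Y$ is $\mathrm{eCov}(X,Y)=e\big[(X,Y),(X',Y')\big]$, the earth mover's distance on $(\mathcal M\times\mathcal M,d)$ between the joint law of $(X,Y)$ and the product of its marginal laws (the law of $(X',Y')$ where $X'\overset{d}{=}X$, $Y'\overset{d}{=}Y$, $X',Y'$ independent). The earth mover's variance is $\mathrm{eVar}(X)=\mathrm{eCov}(X,X)=e\big[(X,X),(X,X')\big]$ with $X'$ an independent copy of $X$. *)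

From HB Require Import structures.
From mathcomp Require Import all_boot all_order all_algebra.
From mathcomp Require Import all_classical all_reals all_analysis.
Set Implicit Arguments. Unset Strict Implicit. Unset Printing Implicit Defensive.
Import Order.TTheory GRing.Theory Num.Theory.
Local Open Scope classical_set_scope.
Local Open Scope ring_scope.

Definition is_metric (R : realType) (T : Type) (rho : T -> T -> R) : Prop :=
  (forall x y, 0 <= rho x y) /\
  (forall x y, rho x y = 0 <-> x = y) /\
  (forall x y, rho x y = rho y x) /\
  (forall x y z, rho x z <= rho x y + rho y z).

Definition law (R : realType) d d' (Omega : measurableType d)
  (T : measurableType d') (P : probability Omega R) (X : Omega -> T)
  : set T -> \bar R := pushforward P X.

Definition coupling (R : realType) d1 d2 (T1 : measurableType d1)
  (T2 : measurableType d2) (mu : set T1 -> \bar R) (nu : set T2 -> \bar R)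
  (gamma : probability (T1 * T2)%type R) : Prop :=
  (forall A, measurable A -> gamma (fst @^-1` A) = mu A) /\
  (forall B, measurable B -> gamma (snd @^-1` B) = nu B).

Definition emd (R : realType) d (S : measurableType d) (rho : S -> S -> R)
  (mu nu : set S -> \bar R) : \bar R :=
  ereal_inf [set (\int[gamma]_z (rho z.1 z.2)%:E)%E
            | gamma in [set gamma | coupling mu nu gamma]].

Definition same_law (R : realType) d1 d2 d' (O1 : measurableType d1)
  (O2 : measurableType d2) (T : measurableType d') (P1 : probability O1 R)
  (P2 : probability O2 R) (X1 : O1 -> T) (X2 : O2 -> T) : Prop :=
  forall A, measurable A -> law P1 X1 A = law P2 X2 A.

Definition indep2 (R : realType) d d1 d2 (O : measurableType d)
  (T1 : measurableType d1) (T2 : measurableType d2) (P : probability O R)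
  (X : O -> T1) (Y : O -> T2) : Prop :=
  forall A B, measurable A -> measurable B ->
    P (X @^-1` A `&` Y @^-1` B) = (P (X @^-1` A) * P (Y @^-1` B))%E.

Definition finite_first_moment (R : realType) d d' (O : measurableType d)
  (M : measurableType d') (delta : M -> M -> R) (P : probability O R)
  (X : O -> M) : Prop :=
  exists x0 : M, (\int[P]_w (delta (X w) x0)%:E < +oo)%E.

From HB Require Import structures.
From mathcomp Require Import all_boot all_order all_algebra.
From mathcomp Require Import all_classical all_reals all_analysis.
From mathcomp Require Import measurable_realfun.
Import Order.TTheory GRing.Theory Num.Theory.
Local Open Scope classical_set_scope.
Local Open Scope ring_scope.

(* Write D(X) := E delta(X1, X2) for two independent copies X1, X2 of X,
   realised as the coordinates X w.1, X w.2 on the product space (P \x P).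
   The theorem is the chain  eCov(X, Y) <= D(X) <= eVar(X)  together with
   the symmetric chain for Y.
   - Upper bound: ((X w.1, Y w.1), (X w.2, Y w.1)) under P \x P is a coupling
     of the law of (X, Y) and of the product of the marginal laws; by the
     second axiom on d its cost is delta(X w.1, X w.2), so its mean is D(X).
     The pair (X w.1, Y w.2) and the first axiom give eCov(X, Y) <= D(Y).
   - Lower bound: for any coupling of (Xa, Xa) and (Xa, Xb) the pointwise
     inequality delta(u, v) <= d(z1, (u, v)) + delta(z1.1, z1.2) integrates to
     D(X) <= cost, since delta vanishes on the diagonal law of (Xa, Xa). *)

Section laws.
Context {R : realType}.
Local Open Scope ereal_scope.

Definition law_prob {d d'} {T : measurableType d} {T' : measurableType d'}
  (P : probability T R) {f : T -> T'} (mf : measurable_fun setT f) :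
  probability T' R :=
  distribution P (HB.pack f (isMeasurableFun.Build _ _ _ _ f mf)).

Lemma measurable_preimage {d d'} {T : measurableType d} {T' : measurableType d'}
  (f : T -> T') (A : set T') :
  measurable_fun setT f -> measurable A -> measurable (f @^-1` A).
Proof. by move=> mf mA; rewrite -[_ @^-1` _]setTI; exact: mf. Qed.

Lemma integral_law_prob {d d'} {T : measurableType d} {T' : measurableType d'}
  (P : probability T R) {f : T -> T'} (mf : measurable_fun setT f)
  (h : T' -> \bar R) : measurable_fun setT h -> (forall z, 0 <= h z) ->
  \int[law_prob P mf]_z h z = \int[P]_w h (f w).
Proof.
move=> mh h0; rewrite /law_prob /distribution /=.
by rewrite ge0_integral_pushforward //= preimage_setT.
Qed.

Lemma integral_same_law {d1 d2 d'} {O1 : measurableType d1}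
  {O2 : measurableType d2} {T : measurableType d'}
  (P1 : probability O1 R) (P2 : probability O2 R) (F1 : O1 -> T) (F2 : O2 -> T)
  (mF1 : measurable_fun setT F1) (mF2 : measurable_fun setT F2)
  (h : T -> \bar R) : measurable_fun setT h -> (forall z, 0 <= h z) ->
  same_law P1 P2 F1 F2 -> \int[P1]_w h (F1 w) = \int[P2]_w h (F2 w).
Proof.
move=> mh h0 F12.
rewrite -(integral_law_prob P1 mF1) // -(integral_law_prob P2 mF2) //.
by apply: eq_measure_integral => A mA _; exact: F12.
Qed.

(* The law of an independent pair is determined by the marginal laws: both
   joint laws coincide with the product of the marginals on rectangles. *)
Lemma same_law_indep_pair {d1 d2 d'} {O1 : measurableType d1}
  {O2 : measurableType d2} {T : measurableType d'}
  (P1 : probability O1 R) (P2 : probability O2 R) (U1 V1 : O1 -> T)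
  (U2 V2 : O2 -> T) :
  measurable_fun setT U1 -> measurable_fun setT V1 ->
  measurable_fun setT U2 -> measurable_fun setT V2 ->
  indep2 P1 U1 V1 -> indep2 P2 U2 V2 ->
  same_law P1 P2 U1 U2 -> same_law P1 P2 V1 V2 ->
  same_law P1 P2 (fun w => (U1 w, V1 w)) (fun w => (U2 w, V2 w)).
Proof.
move=> mU1 mV1 mU2 mV2 iUV1 iUV2 lU lV A mA.
have mUV1 : measurable_fun setT (fun w => (U1 w, V1 w)).
  exact: measurable_fun_pair.
have mUV2 : measurable_fun setT (fun w => (U2 w, V2 w)).
  exact: measurable_fun_pair.
pose mu := (law_prob P2 mU2 \x law_prob P2 mV2)%E.
transitivity (mu A).
- symmetry; apply: (product_measure_unique (m' := law_prob P1 mUV1)) mA.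
  move=> B C mB mC.
  change (P1 (U1 @^-1` B `&` V1 @^-1` C) = P2 (U2 @^-1` B) * P2 (V2 @^-1` C)).
  rewrite iUV1 // -[P1 (U1 @^-1` B)]/(law P1 U1 B).
  by rewrite -[P1 (V1 @^-1` C)]/(law P1 V1 C) lU // lV.
- apply: (product_measure_unique (m' := law_prob P2 mUV2)) mA.
  by move=> B C mB mC; exact: iUV2.
Qed.

Lemma indep2C {d d1 d2} {O : measurableType d} {T1 : measurableType d1}
  {T2 : measurableType d2} (Q : probability O R) (U : O -> T1) (V : O -> T2) :
  indep2 Q U V -> indep2 Q V U.
Proof. by move=> iUV B A mB mA; rewrite setIC iUV // muleC. Qed.

Section product_space.
Context {d1 d2 d'} {O1 : measurableType d1} {O2 : measurableType d2}
  {T : measurableType d'} (P1 : probability O1 R) (P2 : probability O2 R).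

Lemma same_law_fst {f : O1 -> T} : measurable_fun setT f ->
  same_law (P1 \x P2) P1 (fun w => f w.1) f.
Proof.
move=> mf A mA; rewrite /law /pushforward /=.
rewrite (_ : _ @^-1` _ = f @^-1` A `*` setT); last first.
  by apply/seteqP; split=> -[w1 w2] //= [].
rewrite product_measure1E //; last exact: measurable_preimage.
by rewrite -[RHS]mule1; congr (_ * _); exact: probability_setT.
Qed.

Lemma same_law_snd {g : O2 -> T} : measurable_fun setT g ->
  same_law (P1 \x P2) P2 (fun w => g w.2) g.
Proof.
move=> mg A mA; rewrite /law /pushforward /=.
rewrite (_ : _ @^-1` _ = setT `*` g @^-1` A); last first.
  by apply/seteqP; split=> -[w1 w2] //= [].
rewrite product_measure1E //; last exact: measurable_preimage.
by rewrite -[RHS]mul1e; congr (_ * _); exact: probability_setT.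
Qed.

Lemma indep2_fst_snd {f : O1 -> T} {g : O2 -> T} :
  measurable_fun setT f -> measurable_fun setT g ->
  indep2 (P1 \x P2) (fun w => f w.1) (fun w => g w.2).
Proof.
move=> mf mg A B mA mB.
have := same_law_fst mf _ mA; have := same_law_snd mg _ mB.
rewrite /law /pushforward /= => -> ->.
rewrite (_ : _ `&` _ = f @^-1` A `*` g @^-1` B) //.
by rewrite product_measure1E //; exact: measurable_preimage.
Qed.

End product_space.
End laws.

Definition mean_indep_dist {R : realType} {d d'} {O : measurableType d}
  {M : measurableType d'} (delta : M -> M -> R) (P : probability O R)
  (X : O -> M) : \bar R :=
  (\int[(P \x P)%E]_w (delta (X w.1) (X w.2))%:E)%E.

Section covariance_bounds.
Context {R : realType} {dM : measure_display} {M : measurableType dM}.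
Variables (delta : M -> M -> R) (dist : (M * M)%type -> (M * M)%type -> R).
Hypothesis delta_ge0 : forall x y, 0 <= delta x y.
Hypothesis delta_meas : measurable_fun [set: (M * M)%type] (fun p => delta p.1 p.2).
Hypothesis dist_ge0 : forall z z', 0 <= dist z z'.
Hypothesis dist_meas :
  measurable_fun [set: ((M * M) * (M * M))%type] (fun p => dist p.1 p.2).
Hypothesis delta_xx : forall x, delta x x = 0.
Hypothesis dist_triangle : forall z1 z2 z3, dist z1 z3 <= dist z1 z2 + dist z2 z3.
Hypothesis dist_fst_fixed : forall x u v, dist (x, u) (x, v) = delta u v.
Hypothesis dist_snd_fixed : forall x y u, dist (x, u) (y, u) = delta x y.
Hypothesis dist_diag_ge : forall x u v, delta u v <= dist (x, x) (u, v).
(* The key metric inequality: from the diagonal point (a, a), the first and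
   third axioms on d bound delta(u, v) by the cost of moving (a, b) to (u, v)
   plus delta(a, b). *)
Lemma delta_le_dist_add_diag a b u v :
  delta u v <= dist (a, b) (u, v) + delta a b.
Proof.
apply: (le_trans (dist_diag_ge a u v)).
apply: (le_trans (dist_triangle _ (a, b) _)).
by rewrite dist_fst_fixed addrC.
Qed.

Local Open Scope ereal_scope.

Let deltaE_meas :
  measurable_fun setT (fun p : (M * M)%type => (delta p.1 p.2)%:E).
Proof. exact/measurable_EFinP. Qed.

Let distE_meas :
  measurable_fun setT (fun p : ((M * M) * (M * M))%type => (dist p.1 p.2)%:E).
Proof. exact/measurable_EFinP. Qed.

Let deltaE_ge0 (z : M * M) : 0 <= (delta z.1 z.2)%:E.
Proof. by rewrite lee_fin. Qed.

Let distE_ge0 (z : (M * M) * (M * M)) : 0 <= (dist z.1 z.2)%:E.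
Proof. by rewrite lee_fin. Qed.

Lemma emd_le_coupling {d} {T : measurableType d} (Q : probability T R)
  (F : T -> (M * M) * (M * M)) (mu nu : set (M * M) -> \bar R) :
  measurable_fun setT F ->
  (forall A, measurable A -> Q ((fun w => (F w).1) @^-1` A) = mu A) ->
  (forall B, measurable B -> Q ((fun w => (F w).2) @^-1` B) = nu B) ->
  emd dist mu nu <= \int[Q]_w (dist (F w).1 (F w).2)%:E.
Proof.
move=> mF Fmu Fnu; apply: ge_ereal_inf.
exists (\int[law_prob Q mF]_z (dist z.1 z.2)%:E); last first.
  by rewrite integral_law_prob.
by exists (law_prob Q mF).
Qed.

Section covariance_upper_bound.
Context {d0 d1} {Omega : measurableType d0} {Omega1 : measurableType d1}.
Variables (P : probability Omega R) (P1 : probability Omega1 R).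
Variables (X Y : Omega -> M) (X' Y' : Omega1 -> M).
Hypotheses (mX : measurable_fun setT X) (mY : measurable_fun setT Y).
Hypotheses (mX' : measurable_fun setT X') (mY' : measurable_fun setT Y').
Hypotheses (lX' : same_law P1 P X' X) (lY' : same_law P1 P Y' Y).
Hypothesis iXY' : indep2 P1 X' Y'.

Lemma emd_cov_le_product_coupling (G : (Omega * Omega)%type -> M * M) :
  measurable_fun setT G ->
  same_law (P \x P) P1 G (fun w => (X' w, Y' w)) ->
  emd dist (law P (fun w => (X w, Y w))) (law P1 (fun w => (X' w, Y' w)))
  <= \int[(P \x P)]_w (dist (X w.1, Y w.1) (G w))%:E.
Proof.
move=> mG lG.
have mXY : measurable_fun setT (fun w => (X w, Y w)).
  exact: measurable_fun_pair.
have mF : measurable_fun setT (fun w : (Omega * Omega)%type => ((X w.1, Y w.1), G w)).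
  apply: measurable_fun_pair mG.
  exact: measurableT_comp mXY measurable_fst.
by apply: (emd_le_coupling _ _ _ _ mF) => // A mA; exact: same_law_fst.
Qed.

Let mX1 : measurable_fun setT (fun w : (Omega * Omega)%type => X w.1).
Proof. exact: measurableT_comp mX measurable_fst. Qed.
Let mX2 : measurable_fun setT (fun w : (Omega * Omega)%type => X w.2).
Proof. exact: measurableT_comp mX measurable_snd. Qed.
Let mY1 : measurable_fun setT (fun w : (Omega * Omega)%type => Y w.1).
Proof. exact: measurableT_comp mY measurable_fst. Qed.
Let mY2 : measurable_fun setT (fun w : (Omega * Omega)%type => Y w.2).
Proof. exact: measurableT_comp mY measurable_snd. Qed.

Lemma emd_cov_le_mean_dist_fst :
  emd dist (law P (fun w => (X w, Y w))) (law P1 (fun w => (X' w, Y' w)))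
  <= mean_indep_dist delta P X.
Proof.
have mG : measurable_fun setT (fun w : (Omega * Omega)%type => (X w.2, Y w.1)).
  exact: measurable_fun_pair.
have lG : same_law (P \x P) P1 (fun w => (X w.2, Y w.1)) (fun w => (X' w, Y' w)).
  apply: same_law_indep_pair => //; first exact/indep2C/indep2_fst_snd.
  + by move=> A mA; rewrite same_law_snd // lX'.
  + by move=> A mA; rewrite same_law_fst // lY'.
apply: le_trans (emd_cov_le_product_coupling _ mG lG) _.
by under eq_integral do rewrite /= dist_snd_fixed.
Qed.

Lemma emd_cov_le_mean_dist_snd :
  emd dist (law P (fun w => (X w, Y w))) (law P1 (fun w => (X' w, Y' w)))
  <= mean_indep_dist delta P Y.
Proof.
have mG : measurable_fun setT (fun w : (Omega * Omega)%type => (X w.1, Y w.2)).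
  exact: measurable_fun_pair.
have lG : same_law (P \x P) P1 (fun w => (X w.1, Y w.2)) (fun w => (X' w, Y' w)).
  apply: same_law_indep_pair => //; first exact: indep2_fst_snd.
  + by move=> A mA; rewrite same_law_fst // lX'.
  + by move=> A mA; rewrite same_law_snd // lY'.
apply: le_trans (emd_cov_le_product_coupling _ mG lG) _.
by under eq_integral do rewrite /= dist_fst_fixed.
Qed.

End covariance_upper_bound.

Section variance_lower_bound.
Context {d0 d2} {Omega : measurableType d0} {Omega2 : measurableType d2}.
Variables (P : probability Omega R) (P2 : probability Omega2 R).
Variables (X : Omega -> M) (Xa Xb : Omega2 -> M).
Hypothesis mX : measurable_fun setT X.
Hypotheses (mXa : measurable_fun setT Xa) (mXb : measurable_fun setT Xb).
Hypotheses (lXa : same_law P2 P Xa X) (lXb : same_law P2 P Xb X).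
Hypothesis iX : indep2 P2 Xa Xb.

Lemma mean_indep_distE :
  \int[P2]_w (delta (Xa w) (Xb w))%:E = mean_indep_dist delta P X.
Proof.
have mXX : measurable_fun setT
    (fun w : (Omega * Omega)%type => (X w.1, X w.2)).
  by apply: measurable_fun_pair; [exact: measurableT_comp mX measurable_fst
                                 |exact: measurableT_comp mX measurable_snd].
have mXaXb : measurable_fun setT (fun w => (Xa w, Xb w)).
  exact: measurable_fun_pair.
rewrite (integral_same_law P2 (P \x P) _ _ mXaXb mXX
  (fun p => (delta p.1 p.2)%:E)) //.
apply: same_law_indep_pair => //.
- exact: measurableT_comp mX measurable_fst.
- exact: measurableT_comp mX measurable_snd.
- exact: indep2_fst_snd.
- by move=> A mA; rewrite same_law_fst // lXa.
- by move=> A mA; rewrite same_law_snd // lXb.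
Qed.

Lemma mean_indep_dist_le_emd_var :
  mean_indep_dist delta P X
  <= emd dist (law P2 (fun w => (Xa w, Xa w))) (law P2 (fun w => (Xa w, Xb w))).
Proof.
apply/ereal_infP => _ [g [g1 g2] <-].
have mXaXa : measurable_fun setT (fun w => (Xa w, Xa w)).
  exact: measurable_fun_pair.
have mXaXb : measurable_fun setT (fun w => (Xa w, Xb w)).
  exact: measurable_fun_pair.
have diag0 : \int[g]_z (delta z.1.1 z.1.2)%:E = 0.
  rewrite (integral_same_law g P2 _ _ measurable_fst mXaXa
    (fun p => (delta p.1 p.2)%:E)) //.
  under eq_integral do rewrite /= delta_xx.
  exact: integral0.
have offdiag : \int[g]_z (delta z.2.1 z.2.2)%:E = mean_indep_dist delta P X.
  by rewrite -mean_indep_distE (integral_same_law g P2 _ _ measurable_snd mXaXb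
    (fun p => (delta p.1 p.2)%:E)).
have mdelta1 : measurable_fun setT
    (fun z : (M * M) * (M * M) => (delta z.1.1 z.1.2)%:E).
  exact: measurableT_comp deltaE_meas measurable_fst.
rewrite -offdiag -[X in _ <= X]adde0 -diag0 -ge0_integralD //.
apply: ge0_le_integral => //.
- exact: measurableT_comp deltaE_meas measurable_snd.
- exact: emeasurable_funD.
- move=> [[a b] [u v]] _ /=; rewrite -EFinD lee_fin.
  exact: delta_le_dist_add_diag.
Qed.

End variance_lower_bound.
End covariance_bounds.

Theorem theorem2 (R : realType) (dM : measure_display) (M : measurableType dM)
  (delta : M -> M -> R) (dist : (M * M)%type -> (M * M)%type -> R)
  (Hdelta : is_metric delta)
  (Hdelta_meas : measurable_fun [set: (M * M)%type] (fun p => delta p.1 p.2))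
  (Hdist : is_metric dist)
  (Hdist_meas : measurable_fun [set: ((M * M) * (M * M))%type]
                  (fun p => dist p.1 p.2))
  (Hd1 : forall x u v, dist (x, u) (x, v) = delta u v)
  (Hd2 : forall x y u, dist (x, u) (y, u) = delta x y)
  (Hd3 : forall x u v, delta u v <= dist (x, x) (u, v))
  (* X, Y on a common probability space *)
  (d0 : measure_display) (Omega : measurableType d0) (P : probability Omega R)
  (X Y : Omega -> M)
  (mX : measurable_fun [set: Omega] X) (mY : measurable_fun [set: Omega] Y)
  (HX : finite_first_moment delta P X) (HY : finite_first_moment delta P Y)
  (* X' ~ X, Y' ~ Y, X' and Y' independent *)
  (d1 : measure_display) (Omega1 : measurableType d1) (P1 : probability Omega1 R)
  (X' Y' : Omega1 -> M)
  (mX' : measurable_fun [set: Omega1] X') (mY' : measurable_fun [set: Omega1] Y')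
  (lX' : same_law P1 P X' X) (lY' : same_law P1 P Y' Y)
  (iXY' : indep2 P1 X' Y')
  (* Xa ~ X with an independent copy Xb ~ X *)
  (d2 : measure_display) (Omega2 : measurableType d2) (P2 : probability Omega2 R)
  (Xa Xb : Omega2 -> M)
  (mXa : measurable_fun [set: Omega2] Xa) (mXb : measurable_fun [set: Omega2] Xb)
  (lXa : same_law P2 P Xa X) (lXb : same_law P2 P Xb X)
  (iX : indep2 P2 Xa Xb)
  (* Ya ~ Y with an independent copy Yb ~ Y *)
  (d3 : measure_display) (Omega3 : measurableType d3) (P3 : probability Omega3 R)
  (Ya Yb : Omega3 -> M)
  (mYa : measurable_fun [set: Omega3] Ya) (mYb : measurable_fun [set: Omega3] Yb)
  (lYa : same_law P3 P Ya Y) (lYb : same_law P3 P Yb Y)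
  (iY : indep2 P3 Ya Yb) :
  (emd dist (law P (fun w => (X w, Y w))) (law P1 (fun w => (X' w, Y' w)))
   <= mine (emd dist (law P2 (fun w => (Xa w, Xa w))) (law P2 (fun w => (Xa w, Xb w))))
           (emd dist (law P3 (fun w => (Ya w, Ya w))) (law P3 (fun w => (Ya w, Yb w)))))%E.
Proof.
case: Hdelta => delta_ge0 [delta_eq0 _].
have delta_xx x : delta x x = 0 by exact/delta_eq0.
case: Hdist => dist_ge0 [_ [_ dist_triangle]].
rewrite le_min; apply/andP; split.
- apply: (@le_trans _ _ (mean_indep_dist delta P X)).
    by apply: emd_cov_le_mean_dist_fst.
  by apply: mean_indep_dist_le_emd_var.
- apply: (@le_trans _ _ (mean_indep_dist delta P Y)).
    by apply: emd_cov_le_mean_dist_snd.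
  by apply: mean_indep_dist_le_emd_var.
Qed.
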